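(* Let $\alpha\in(0,1]$ and let $\{Z_i\}$ be an i.i.d. sequence of $\mathbb{R}^d$-valued random variables on a sublinear expectation space $(\Omega,\mathcal{H},\hat{\mathbb{E}})$ with $S_n=\sum_{i=1}^nZ_i$, and assume there is $0<\delta<\alpha$ with $M_\delta:=\sup_n\hat{\mathbb{E}}[|n^{-1/\alpha}S_n|^\delta]<\infty$. For $\phi\in C_{b,Lip}(\mathbb{R}^d)$ let $\hat{\mathbb{F}}[\phi]:=\sup_n\hat{\mathbb{E}}[\phi(S_n/\sqrt[\alpha]{n})]$. Then $\hat{\mathbb{F}}$ is a tight sublinear expectation on $(\mathbb{R}^d,C_{b,Lip}(\mathbb{R}^d))$.
   Context: Sublinear expectation: a functional that is monotone, constant preserving, sub-additive and positively homogeneous; random variables need only satisfy $\varphi(X)\in\mathcal{H}$ for bounded Lipschitz $\varphi$. I.i.d. means each $Z_{i+1}$ has the same distribution as $Z_i$ and is independent from $(Z_1,\dots,Z_i)$ in the sublinear sense ($\hat{\mathbb{E}}[\varphi(X,Y)]=\hat{\mathbb{E}}[\hat{\mathbb{E}}[\varphi(x,Y)]_{x=X}]$). A sublinear expectation $\mathbb{E}$ on $(\mathbb{R}^n,C_{b,Lip}(\mathbb{R}^n))$ is tight if for each $\varepsilon>0$ there exist $N>0$ and $\varphi\in C_{b,Lip}(\mathbb{R}^n)$ with $\mathbb{1}_{\{|x|\ge N\}}\le\varphi$ and $\mathbb{E}[\varphi]<\varepsilon$. *)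

From HB Require Import structures.
From mathcomp Require Import all_boot all_order all_algebra.
From mathcomp Require Import all_classical all_reals all_analysis.
Set Implicit Arguments. Unset Strict Implicit. Unset Printing Implicit Defensive.
Import Order.TTheory GRing.Theory Num.Theory.
Import numFieldNormedType.Exports.
Local Open Scope classical_set_scope.
Local Open Scope ring_scope.

Definition cblip (R : realType) (V : normedModType R) (phi : V -> R) : Prop :=
  (exists C : R, forall x, `|phi x| <= C) /\
  (exists L : R, forall x y, `|phi x - phi y| <= L * `|x - y|).

Definition sublinear_expectation (R : realType) (T : Type)
  (H : set (T -> R)) (E : (T -> R) -> R) : Prop :=
  (forall c : R, H (fun _ => c)) /\
      (forall X Y, H X -> H Y -> H (X \+ Y)) /\
      (forall (a : R) X, H X -> H (fun w => a * X w)) /\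
      (forall X Y, H X -> H Y -> (forall w, X w <= Y w) -> E X <= E Y) /\
      (forall c : R, E (fun _ => c) = c) /\
      (forall X Y, H X -> H Y -> E (X \+ Y) <= E X + E Y) /\
      (forall (l : R) X, H X -> 0 <= l -> E (fun w => l * X w) = l * E X).

Definition random_variable (R : realType) (Omega : Type) (H : set (Omega -> R))
  (V : normedModType R) (X : Omega -> V) : Prop :=
  forall phi : V -> R, cblip phi -> H (phi \o X).

(* The random matrix whose rows are Z_1, ..., Z_i (0-indexed: Z 0, ..., Z i.-1),
   i.e. the random vector (Z_1, ..., Z_i) in R^{d i}. *)
Definition first_rows (R : realType) (Omega : Type) (d : nat)
  (Z : nat -> Omega -> 'rV[R]_d) (i : nat) (w : Omega) : 'M[R]_(i, d) :=
  \matrix_(k < i, j < d) Z k w 0 j.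

(* {Z_i} is an i.i.d. sequence (0-indexed: Z 0 = Z_1, Z 1 = Z_2, ...) of
   R^d-valued random variables on (Omega, H, E). *)
Definition iid_seq (R : realType) (Omega : Type) (H : set (Omega -> R))
  (E : (Omega -> R) -> R) (d : nat) (Z : nat -> Omega -> 'rV[R]_d) : Prop :=
  (forall i, random_variable H (first_rows Z i)) /\
  (forall k, random_variable H (Z k)) /\
  (forall k (phi : 'rV[R]_d -> R), cblip phi ->
      E (phi \o Z k.+1) = E (phi \o Z k)) /\
  (* Z_{i+1} is independent from (Z_1, ..., Z_i) *)
  (forall i (phi : 'M[R]_(i, d) * 'rV[R]_d -> R), cblip phi ->
      E (fun w => phi (first_rows Z i w, Z i w)) =
      E (fun w => E (fun w' => phi (first_rows Z i w, Z i w')))).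

Definition partial_sum (R : realType) (Omega : Type) (d : nat)
  (Z : nat -> Omega -> 'rV[R]_d) (n : nat) (w : Omega) : 'rV[R]_d :=
  \sum_(k < n) Z k w.

Definition normalized_sum (R : realType) (Omega : Type) (d : nat)
  (Z : nat -> Omega -> 'rV[R]_d) (alpha : R) (n : nat) (w : Omega) : 'rV[R]_d :=
  (n%:R `^ (- alpha^-1)) *: partial_sum Z n w.

Definition Fhat_set (R : realType) (Omega : Type) (E : (Omega -> R) -> R) (d : nat)
  (Z : nat -> Omega -> 'rV[R]_d) (alpha : R) (phi : 'rV[R]_d -> R) : set R :=
  [set E (phi \o normalized_sum Z alpha n) | n in [set n : nat | (0 < n)%N]].

Definition Fhat (R : realType) (Omega : Type) (E : (Omega -> R) -> R) (d : nat)
  (Z : nat -> Omega -> 'rV[R]_d) (alpha : R) (phi : 'rV[R]_d -> R) : R :=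
  sup (Fhat_set E Z alpha phi).

Definition tight (R : realType) (d : nat) (F : ('rV[R]_d -> R) -> R) : Prop :=
  forall eps : R, 0 < eps -> exists N : R, 0 < N /\
    exists phi : 'rV[R]_d -> R, cblip phi /\
      (forall x, (if N <= `|x| then 1 else 0) <= phi x) /\ F phi < eps.

From Pilot Require Import Defs.
From HB Require Import structures.
From mathcomp Require Import all_boot all_order all_algebra.
From mathcomp Require Import all_classical all_reals all_analysis.
From mathcomp Require Import ring lra.
Set Implicit Arguments.
Unset Strict Implicit.
Unset Printing Implicit Defensive.
Import Order.TTheory GRing.Theory Num.Theory.
Import numFieldNormedType.Exports.
Local Open Scope classical_set_scope.
Local Open Scope ring_scope.

(* Each [phi |-> E[phi(S_n / n^(1/alpha))]] is a sublinear expectation on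
   C_{b,Lip}(R^d), because [S_n / n^(1/alpha)] is a Lipschitz image of
   (Z_1, ..., Z_n); a pointwise supremum of sublinear expectations, finite
   because test functions are bounded, is again one.  Tightness is Markov's
   inequality: if [0 <= phi <= 1] vanishes on the ball of radius K, then
   [K^delta phi(x) <= |x|^delta], so [F[phi] <= M_delta / K^delta]. *)

Section cblip.
Variables (R : realType) (V : normedModType R).

Lemma cblip_cst (c : R) : cblip (fun _ : V => c).
Proof.
split; first by exists `|c|.
by exists 0 => x y; rewrite subrr normr0 mul0r.
Qed.

Lemma cblipD (phi psi : V -> R) : cblip phi -> cblip psi -> cblip (phi \+ psi).
Proof.
move=> [[C1 hC1] [L1 hL1]] [[C2 hC2] [L2 hL2]]; split.
  exists (C1 + C2) => x; exact: le_trans (ler_normD _ _) (lerD (hC1 x) (hC2 x)).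
exists (L1 + L2) => x y /=; rewrite mulrDl.
rewrite (_ : _ - _ = (phi x - phi y) + (psi x - psi y)); last by ring.
exact: le_trans (ler_normD _ _) (lerD (hL1 x y) (hL2 x y)).
Qed.

Lemma cblipZ (a : R) (phi : V -> R) : cblip phi -> cblip (fun x => a * phi x).
Proof.
move=> [[C hC] [L hL]]; split.
  by exists (`|a| * C) => x; rewrite normrM ler_wpM2l.
by exists (`|a| * L) => x y; rewrite -mulrBr normrM -mulrA ler_wpM2l.
Qed.

Lemma cblip_comp (W : normedModType R) (f : V -> W) (K : R) (phi : W -> R) :
  (forall x y, `|f x - f y| <= K * `|x - y|) -> cblip phi -> cblip (phi \o f).
Proof.
move=> hf [[C hC] [L hL]]; split; first by exists C => x; exact: hC.
exists (Num.max L 0 * K) => x y /=.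
have L0 : 0 <= Num.max L 0 by rewrite le_max lexx orbT.
apply: le_trans (hL _ _) _; apply: (@le_trans _ _ (Num.max L 0 * `|f x - f y|)).
  by rewrite ler_wpM2r // le_max lexx.
by rewrite -mulrA ler_wpM2l.
Qed.

End cblip.

Section sublinear_expectation.
Variables (R : realType) (T : Type) (H : set (T -> R)).

Lemma sublinear_expectation_le_cst (E : (T -> R) -> R) (X : T -> R) (c : R) :
  sublinear_expectation H E -> H X -> (forall t, X t <= c) -> E X <= c.
Proof.
move=> [Hc [_ [_ [Emono [Econst _]]]]] HX Xc.
by rewrite -[leRHS](Econst c); apply: Emono.
Qed.

Lemma sublinear_expectation_comp (E : (T -> R) -> R) (V : normedModType R)
    (X : T -> V) :
  sublinear_expectation H E -> Defs.random_variable H X ->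
  sublinear_expectation (@cblip R V) (fun phi => E (phi \o X)).
Proof.
move=> [_ [_ [_ [Emono [Econst [Esub Ehom]]]]]] HX.
do 3![split; first by [exact: cblip_cst | exact: cblipD | exact: cblipZ]].
split; first by move=> phi psi /HX ? /HX ? le_phi; apply: Emono => // t; exact: le_phi.
split; first by move=> c; exact: Econst.
by split=> [phi psi /HX ? /HX ? | l phi /HX ? l0]; [exact: Esub | exact: Ehom].
Qed.

Section supremum.
Variables (I : Type) (J : set I) (F : I -> (T -> R) -> R).
Hypothesis J0 : J !=set0.
Hypothesis sublinF : forall i, J i -> sublinear_expectation H (F i).
Hypothesis H_ubounded : forall X, H X -> exists C, forall t, X t <= C.

Lemma has_sup_family (X : T -> R) : H X -> has_sup [set F i X | i in J].
Proof.
move=> HX; have [i Ji] := J0; split; first by exists (F i X), i.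
have [C XC] := H_ubounded HX.
by exists C => _ [j Jj <-]; exact: sublinear_expectation_le_cst (sublinF Jj) HX XC.
Qed.

Lemma le_sup_family (X : T -> R) (i : I) :
  H X -> J i -> F i X <= sup [set F j X | j in J].
Proof. by move=> HX Ji; apply: ub_le_sup; [case: (has_sup_family HX) | exists i]. Qed.

Lemma sublinear_expectation_sup :
  sublinear_expectation H (fun X => sup [set F i X | i in J]).
Proof.
have [i Ji] := J0; have [Hc [HD [HZ _]]] := sublinF Ji.
have ne X : [set F j X | j in J] !=set0 by exists (F i X), i.
do 3![split=> //]; split.
  move=> X Y HX HY XY; apply: ge_sup => // _ [j Jj <-].
  have [_ [_ [_ [Emono _]]]] := sublinF Jj.
  exact: le_trans (Emono _ _ HX HY XY) (le_sup_family HY Jj).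
split.
  move=> c; have Fcst j : J j -> F j (fun=> c) = c.
    by move=> Jj; have [_ [_ [_ [_ [-> _]]]]] := sublinF Jj.
  rewrite [X in sup X](_ : _ = [set c]) ?sup1 //.
  by apply/seteqP; split=> [_ [j Jj <-] | _ ->]; [rewrite Fcst | exists i; rewrite ?Fcst].
split.
  move=> X Y HX HY; apply: ge_sup => // _ [j Jj <-].
  have [_ [_ [_ [_ [_ [Esub _]]]]]] := sublinF Jj.
  exact: le_trans (Esub _ _ HX HY) (lerD (le_sup_family HX Jj) (le_sup_family HY Jj)).
move=> l X HX l0; have HlX := HZ l X HX.
have Fhom j : J j -> F j (fun t => l * X t) = l * F j X.
  by move=> Jj; have [_ [_ [_ [_ [_ [_ ->]]]]]] := sublinF Jj.
apply/eqP; rewrite eq_le; apply/andP; split.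
  apply: ge_sup => // _ [j Jj <-].
  by rewrite Fhom // ler_wpM2l // le_sup_family.
have [l_eq0|l_neq0] := eqVneq l 0.
  by apply: le_trans (le_sup_family HlX Ji); rewrite Fhom // l_eq0 !mul0r.
have l_gt0 : 0 < l by rewrite lt_def l_neq0.
rewrite mulrC -ler_pdivlMr //; apply: ge_sup => // _ [j Jj <-].
by rewrite ler_pdivlMr // mulrC -Fhom // le_sup_family.
Qed.

End supremum.
End sublinear_expectation.

Section ramp.
Variables (R : realType) (V : normedModType R).

Lemma clamp01_lip (a b : R) :
  `|Num.min 1 (Num.max 0 a) - Num.min 1 (Num.max 0 b)| <= `|a - b|.
Proof.
have := ler_norm (a - b); rewrite distrC; have := ler_norm (b - a).
rewrite /Order.min /Order.max ler_norml.
by case: (ltP 0 a); case: (ltP 0 b); case: (ltP 1 a); case: (ltP 1 b);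
  rewrite ?ltr10 /= => *; apply/andP; split; lra.
Qed.

Lemma clamp01_ge0 (a : R) : 0 <= Num.min 1 (Num.max 0 a).
Proof. by rewrite le_min ler01 le_max lexx. Qed.

Lemma clamp01_le1 (a : R) : Num.min 1 (Num.max 0 a) <= 1.
Proof. by rewrite ge_min lexx. Qed.

Definition ramp (K : R) (x : V) : R := Num.min 1 (Num.max 0 (`|x| - K)).

Lemma cblip_ramp (K : R) : cblip (ramp K).
Proof.
split; exists 1 => x; first by rewrite ger0_norm ?clamp01_ge0 ?clamp01_le1.
move=> y; apply: le_trans (clamp01_lip _ _) _.
by rewrite mul1r (_ : _ - _ = `|x| - `|y|) ?ler_dist_dist //; ring.
Qed.

Lemma ramp_ge_indicator (K : R) (x : V) :
  (if K + 1 <= `|x| then 1 else 0) <= ramp K x.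
Proof.
case: ifPn => [Kx|_]; last exact: clamp01_ge0.
by rewrite /ramp le_min lexx le_max; apply/orP; right; lra.
Qed.

Lemma ramp_markov (K delta : R) (x : V) : 0 < K -> 0 < delta ->
  K `^ delta * ramp K x <= `|x| `^ delta.
Proof.
move=> K0 delta0; have [xK|Kx] := leP `|x| K.
  by rewrite /ramp max_l ?min_r ?mulr0 ?powR_ge0 //; lra.
apply: (@le_trans _ _ (K `^ delta)).
  by rewrite -[leRHS]mulr1 ler_wpM2l ?powR_ge0 ?clamp01_le1.
by rewrite ge0_ler_powR ?nnegrE ?ltW //; exact: lt_trans Kx.
Qed.

End ramp.

Lemma tight_of_moment_bound (R : realType) (d : nat) (F : ('rV[R]_d -> R) -> R)
    (delta M : R) :
  sublinear_expectation (@cblip R _) F -> 0 < delta ->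
  (forall phi, cblip phi -> (forall x, phi x <= `|x| `^ delta) -> F phi <= M) ->
  tight F.
Proof.
move=> [_ [_ [_ [_ [Fconst [_ Fhom]]]]]] delta0 FM eps eps0.
have M0 : 0 <= M.
  by rewrite -(Fconst 0); apply: FM => [|x]; [exact: cblip_cst | exact: powR_ge0].
pose B := M / eps + 1; pose K := B `^ delta^-1.
have B0 : 0 < B by rewrite /B; have := divr_ge0 M0 (ltW eps0); lra.
have K0 : 0 < K by exact: powR_gt0.
have KB : K `^ delta = B by rewrite -powRrM mulVf ?gt_eqF // powRr1 // ltW.
exists (K + 1); split; first lra.
exists (ramp K); split; first exact: cblip_ramp.
split=> [x|]; first exact: ramp_ge_indicator.
have : F (fun x => K `^ delta * ramp K x) <= M.
  by apply: FM => [|x]; [exact/cblipZ/cblip_ramp | exact: ramp_markov].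
rewrite Fhom; [rewrite KB | exact: cblip_ramp | exact: powR_ge0].
rewrite -ler_pdivlMl // => /le_lt_trans; apply.
rewrite mulrC ltr_pdivrMr // /B mulrDr mulr1 mulrC divfK ?gt_eqF //; lra.
Qed.

Section normalized_sum.
Variables (R : realType) (Omega : Type) (H : set (Omega -> R)).

Lemma norm_row_le m n (A : 'M[R]_(m, n)) k : `|row k A| <= `|A|.
Proof.
rewrite [leLHS]/Num.norm [leRHS]/Num.norm /= !mx_normrE.
apply/bigmax_leP; split => [|[i j] _]; first by apply/bigmax_geP; left.
by apply/bigmax_geP; right; exists (k, j); rewrite //= mxE.
Qed.

Lemma scaled_row_sum_lip n d (c : R) (A B : 'M[R]_(n, d)) :
  `|c *: \sum_(k < n) row k A - c *: \sum_(k < n) row k B| <= `|c| * n%:R * `|A - B|.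
Proof.
rewrite -scalerBr -sumrB normrZ -mulrA ler_wpM2l //.
apply: le_trans (ler_norm_sum _ _ _) _.
apply: (@le_trans _ _ (\sum_(k < n) `|A - B|)).
  by apply: ler_sum => k _; rewrite -linearB norm_row_le.
by rewrite sumr_const card_ord mulr_natl.
Qed.

Lemma normalized_sum_first_rows d (Z : nat -> Omega -> 'rV[R]_d) alpha n w :
  normalized_sum Z alpha n w =
  n%:R `^ (- alpha^-1) *: \sum_(k < n) row k (first_rows Z n w).
Proof.
congr (_ *: _); apply: eq_bigr => k _; by apply/rowP => j; rewrite !mxE.
Qed.

(* Qualified: plain [random_variable] is the probability-theory notion of
   mathcomp-analysis. *)
Lemma random_variable_normalized_sum d (Z : nat -> Omega -> 'rV[R]_d) alpha n :
  Defs.random_variable H (first_rows Z n) ->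
  Defs.random_variable H (normalized_sum Z alpha n).
Proof.
move=> Hrows phi cphi.
rewrite (_ : _ \o _ = (phi \o fun A => n%:R `^ (- alpha^-1) *:
                         \sum_(k < n) row k A) \o first_rows Z n).
  by apply: Hrows; exact: cblip_comp (@scaled_row_sum_lip n d _) cphi.
by apply: funext => w /=; rewrite normalized_sum_first_rows.
Qed.

End normalized_sum.

Theorem lemma4p2 (R : realType) (Omega : Type) (H : set (Omega -> R))
  (E : (Omega -> R) -> R) (d : nat) (Z : nat -> Omega -> 'rV[R]_d)
  (alpha delta : R) :
  sublinear_expectation H E ->
  iid_seq H E Z ->
  0 < alpha -> alpha <= 1 ->
  0 < delta -> delta < alpha ->
  (* M_delta = sup_n E[|n^{-1/alpha} S_n|^delta] < oo, where E[|Y|^delta] is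
     the sup of E[phi(Y)] over phi in C_{b,Lip} with phi <= |.|^delta *)
  (exists M : R, forall (n : nat) (phi : 'rV[R]_d -> R), (0 < n)%N ->
      cblip phi -> (forall x, phi x <= `|x| `^ delta) ->
      E (phi \o normalized_sum Z alpha n) <= M) ->
  (forall phi : 'rV[R]_d -> R, cblip phi -> has_sup (Fhat_set E Z alpha phi)) /\
  sublinear_expectation (@cblip R _) (Fhat E Z alpha) /\
  tight (Fhat E Z alpha).
Proof.
(* The constraints on alpha, and delta < alpha, only serve to make M_delta
   finite, which is assumed here. *)
move=> sublinE [Hrows _] _ _ delta0 _ [M HM].
pose J := [set n : nat | (0 < n)%N].
pose Fn n (phi : 'rV[R]_d -> R) := E (phi \o normalized_sum Z alpha n).
have J0 : J !=set0 by exists 1%N.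
have sublinFn n : J n -> sublinear_expectation (@cblip R _) (Fn n).
  move=> _; apply: sublinear_expectation_comp sublinE _.
  exact: random_variable_normalized_sum.
have cblip_ubounded (phi : 'rV[R]_d -> R) : cblip phi -> exists C, forall x, phi x <= C.
  by move=> [[C hC] _]; exists C => x; exact: le_trans (ler_norm _) (hC x).
have sublinF : sublinear_expectation (@cblip R _) (Fhat E Z alpha).
  exact: sublinear_expectation_sup J0 sublinFn cblip_ubounded.
split; first by move=> phi; exact: has_sup_family J0 sublinFn cblip_ubounded phi.
split=> //; apply: tight_of_moment_bound sublinF delta0 _ => phi cphi phi_le.
by apply: ge_sup => [|_ [n n0 <-]]; [exists (Fn 1%N phi), 1%N | exact: HM].
Qed.
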